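(* Let $n\ge1$, $B=\{0,1,\dots,n\}$ as below, $j\ge0$, $b\in B$, and let $(\mu_i)_{i\in B}\in\mathbb Z^{n+1}$ satisfy $\sum_{i\in B}\mu_i=j$. Put $\mu=(\mu_n-\mu_0)\Lambda_0+(\mu_0-\mu_1)\Lambda_1+\cdots+(\mu_{n-1}-\mu_n)\Lambda_n\in P_{cl}$. Then $$g_j(b,\mu)=q^{\frac12\sum_{i\in B}\mu_i(\mu_i-1)+\sum_{i\in B}H(b\otimes i)\mu_i}\begin{bmatrix}j\\ \mu\end{bmatrix}_q .$$
   Context: Affine algebra $A^{(1)}_n$ with fundamental weights $\Lambda_0,\dots,\Lambda_n$, $P_{cl}=\bigoplus\mathbb Z\Lambda_i$. $B=\{0,1,\dots,n\}$ with weights $wt(b)=\Lambda_{\overline{b+1}}-\Lambda_b$, where $\overline x\in\{0,\dots,n\}$, $\overline x\equiv x\pmod{n+1}$; energy function $H(b\otimes b')=0$ if $b<b'$ and $=1$ if $b\ge b'$. For $j\ge0$, $b\in B$, $\mu\in P_{cl}$: $g_j(b,\mu)=\sum q^{\sum_{i=1}^j iH(b_{i+1}\otimes b_i)}$, summed over $(b_j,\dots,b_1)\in B^j$ with $wt(b_j)+\cdots+wt(b_1)=\mu$, where $b_{j+1}=b$. For an integer vector $\gamma=(\gamma_b)_{b\in B}$: $\begin{bmatrix}j\\ \gamma\end{bmatrix}_q=(q)_j/\prod_{b\in B}(q)_{\gamma_b}$ if $\sum_b\gamma_b=j$ and all $\gamma_b\ge0$, and $0$ otherwise; $(q)_m=\prod_{i=1}^m(1-q^i)$.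 *)

From HB Require Import structures.
From mathcomp Require Import all_boot all_order all_algebra.
Set Implicit Arguments. Unset Strict Implicit. Unset Printing Implicit Defensive.
Import Order.TTheory GRing.Theory Num.Theory.
Local Open Scope ring_scope.

(* The crystal B = {0,...,n} is represented by 'I_n.+1.
   P_cl = \oplus Z Lambda_i is represented by {ffun 'I_n.+1 -> int},
   the value at k being the coefficient of Lambda_k. *)

Definition succB (n : nat) (b : 'I_n.+1) : 'I_n.+1 := inord ((b + 1) %% n.+1)%N.

Definition wtB (n : nat) (b : 'I_n.+1) : {ffun 'I_n.+1 -> int} :=
  [ffun k => (k == succB b)%:Z - (k == b)%:Z].

Definition Hen (n : nat) (b b' : 'I_n.+1) : nat := if (b < b')%N then 0%N else 1%N.

(* For f : 'I_j -> B encoding (b_j,...,b_1) with b_i = f (i-1), and b_{j+1} = b: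
   bpath j f b i = b_i for 1 <= i <= j+1. *)
Definition bpath (n j : nat) (f : {ffun 'I_j -> 'I_n.+1}) (b : 'I_n.+1) (i : nat)
  : 'I_n.+1 :=
  match i with
  | k.+1 => if (insub k : option 'I_j) is Some i then f i else b
  | 0 => b
  end.

Definition totwt (n j : nat) (f : {ffun 'I_j -> 'I_n.+1}) : {ffun 'I_n.+1 -> int} :=
  \sum_(i < j) wtB (f i).

Definition Dexp (n j : nat) (f : {ffun 'I_j -> 'I_n.+1}) (b : 'I_n.+1) : nat :=
  (\sum_(1 <= i < j.+1) i * Hen (bpath f b i.+1) (bpath f b i))%N.

Definition gfun (n j : nat) (b : 'I_n.+1) (mu : {ffun 'I_n.+1 -> int}) : {poly int} :=
  \sum_(f : {ffun 'I_j -> 'I_n.+1} | totwt f == mu) 'X^(Dexp f b).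

Definition qpoch (m : nat) : {poly int} := \prod_(1 <= i < m.+1) (1 - 'X^i).

Notation ratfun := {fraction {poly int}}.

Definition qmultinom (n j : nat) (gamma : 'I_n.+1 -> int) : ratfun :=
  if ((\sum_(b < n.+1) gamma b) == j%:Z) && [forall b, 0 <= gamma b]
  then (tofrac (qpoch j)) / \prod_(b < n.+1) tofrac (qpoch `|gamma b|%N)
  else 0.

(* mu = (mu_n - mu_0) Lambda_0 + (mu_0 - mu_1) Lambda_1 + ... + (mu_{n-1}-mu_n) Lambda_n,
   i.e. the coefficient of Lambda_k is mu_{k-1 mod n+1} - mu_k. *)
Definition predB (n : nat) (k : 'I_n.+1) : 'I_n.+1 := inord ((k + n) %% n.+1)%N.
Definition muwt (n : nat) (mu : 'I_n.+1 -> int) : {ffun 'I_n.+1 -> int} :=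
  [ffun k => mu (predB k) - mu k].

Definition qF : ratfun := tofrac 'X.

From HB Require Import structures.
From mathcomp Require Import all_boot all_order all_algebra.
From mathcomp Require Import zify ring.
Import Order.TTheory GRing.Theory Num.Theory.
Local Open Scope ring_scope.
Set Implicit Arguments. Unset Strict Implicit. Unset Printing Implicit Defensive.

(* Since wt(i) = Lambda_{i+1} - Lambda_i, the total weight of a path only sees the
   multiplicities m_i of the letters, and (given sum_i m_i = j) it equals mu exactly
   when m = mu.  Prepending the letter c = b_j to a path of length j - 1 contributes
   j H(b (x) c) to the energy, which gives the recursion
     g_j(b, m) = sum_{c, m_c > 0} q^{j H(b (x) c)} g_{j-1}(c, m - e_c).
   Clearing denominators, the claim becomes the polynomial identity
     g_j(b, m) prod_c (q)_{m_c} = q^{sum_c C(m_c, 2) + sum_{c <= b} m_c} (q)_j,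
   and the induction step reduces to a telescoping sum over c. *)

Section Crystal.

Variable n : nat.
Implicit Types (b c i k : 'I_n.+1) (m : 'I_n.+1 -> nat).

Lemma succBK k : succB (predB k) = k.
Proof.
apply/val_inj; rewrite /succB /predB /= !inordK ?ltn_mod //.
by rewrite modnDml -addnA addn1 -modnDmr modnn addn0 modn_small.
Qed.

Lemma predBK k : predB (succB k) = k.
Proof.
apply/val_inj; rewrite /succB /predB /= !inordK ?ltn_mod //.
by rewrite modnDml -addnA add1n -modnDmr modnn addn0 modn_small.
Qed.

Lemma predB_inordS (i : nat) : (i < n)%N -> predB (inord i.+1 : 'I_n.+1) = inord i.
Proof.
move=> lt_i_n; apply/val_inj; rewrite /predB /= !inordK; try lia.
by rewrite addSn -addnS -modnDmr modnn addn0 modn_small //; lia.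
Qed.

Lemma predB_invariant_const (T : Type) (d : 'I_n.+1 -> T) :
  (forall k, d (predB k) = d k) -> forall k, d k = d ord0.
Proof.
move=> dP k; rewrite -(inord_val k); have := ltn_ord k.
elim: (val k) => [|i IHi] lt_i; first by congr d; apply/val_inj; rewrite /= inordK.
by rewrite -IHi 1?ltnW // -(predB_inordS lt_i) dP.
Qed.

Definition mult (j : nat) (f : {ffun 'I_j -> 'I_n.+1}) c : nat :=
  (\sum_(k < j) (f k == c))%N.

Lemma totwt_mult (j : nat) (f : {ffun 'I_j -> 'I_n.+1}) k :
  totwt f k = (mult f (predB k))%:Z - (mult f k)%:Z.
Proof.
rewrite /totwt sum_ffunE; under eq_bigr do rewrite ffunE.
rewrite sumrB /mult -!natz !natr_sum; congr (_ - _); apply: eq_bigr => i _.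
  rewrite natz; congr (Posz (nat_of_bool _)).
  by apply/eqP/eqP => ->; rewrite ?predBK ?succBK.
by rewrite natz eq_sym.
Qed.

Lemma sum_mult (j : nat) (f : {ffun 'I_j -> 'I_n.+1}) : (\sum_c mult f c)%N = j.
Proof.
rewrite /mult exchange_big /= -[j in RHS]card_ord -sum1_card.
apply: eq_bigr => k _; rewrite (bigD1 (f k)) //= eqxx big1 // => c.
by rewrite eq_sym => /negbTE ->.
Qed.

Lemma totwt_muwtE (j : nat) (f : {ffun 'I_j -> 'I_n.+1}) (mu : 'I_n.+1 -> int) :
  \sum_i mu i = j%:Z ->
  (totwt f == muwt mu) = [forall c, (mult f c)%:Z == mu c].
Proof.
move=> sum_mu; apply/eqP/forallP => [wt_eq|mult_eq]; last first.
  by apply/ffunP => i; rewrite totwt_mult ffunE !(eqP (mult_eq _)).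
pose d c := (mult f c)%:Z - mu c.
have dP k : d (predB k) = d k.
  by move/ffunP: wt_eq => /(_ k); rewrite totwt_mult ffunE /d; lia.
have d_const := predB_invariant_const dP.
have sum_d : d ord0 *+ n.+1 = 0.
  rewrite -[n.+1]card_ord -sumr_const -(eq_bigr _ (fun c _ => d_const c)).
  rewrite /d sumrB sum_mu -[in j%:Z](sum_mult f) -natz natr_sum.
  by apply/eqP; rewrite subr_eq0; apply/eqP/eq_bigr => c _; rewrite natz.
move=> c; move/eqP: sum_d; rewrite mulrn_eq0 /= => /eqP d0.
by rewrite -subr_eq0 -/(d c) d_const d0.
Qed.

Definition ffun_rcons (j : nat) (g : {ffun 'I_j -> 'I_n.+1}) c
  : {ffun 'I_j.+1 -> 'I_n.+1} :=
  [ffun i : 'I_j.+1 => if (insub (val i) : option 'I_j) is Some k then g k else c].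

Section Rcons.

Variables (j : nat) (g : {ffun 'I_j -> 'I_n.+1}) (c : 'I_n.+1).

Lemma ffun_rcons_max : ffun_rcons g c ord_max = c.
Proof. by rewrite ffunE insubN //= ltnn. Qed.

Lemma ffun_rcons_widen (k : 'I_j) : ffun_rcons g c (widen_ord (leqnSn j) k) = g k.
Proof. by rewrite ffunE /= valK. Qed.

Lemma ffun_rcons_lift (k : 'I_j) : ffun_rcons g c (lift ord_max k) = g k.
Proof.
by rewrite -ffun_rcons_widen; congr (ffun_rcons _ _ _); apply/val_inj;
  rewrite /= /bump leqNgt ltn_ord.
Qed.

Lemma mult_ffun_rcons i : mult (ffun_rcons g c) i = (mult g i + (c == i))%N.
Proof.
rewrite /mult big_ord_recr /= ffun_rcons_max; congr addn.
by apply: eq_bigr => k _; rewrite ffun_rcons_widen.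
Qed.

Lemma bpath_ffun_rcons (b : 'I_n.+1) (k : nat) :
  (k <= j)%N -> bpath (ffun_rcons g c) b k.+1 = bpath g c k.+1.
Proof.
move=> le_k_j /=; case: insubP => [i _ val_i|]; last by rewrite ltnS le_k_j.
by rewrite ffunE val_i.
Qed.

Lemma Dexp_ffun_rcons (b : 'I_n.+1) :
  Dexp (ffun_rcons g c) b = (Dexp g c + j.+1 * Hen b c)%N.
Proof.
rewrite /Dexp big_nat_recr //; congr (_ + _)%N.
  apply: eq_big_nat => -[//|i] /andP [_ lt_i].
  by rewrite !bpath_ffun_rcons //; lia.
congr (_ * _)%N; congr Hen; first by rewrite /= insubN //= ltnn.
by rewrite bpath_ffun_rcons //= insubN //= ltnn.
Qed.

End Rcons.

Lemma sum_ffun_rcons (j : nat) (R : nmodType) (F : {ffun 'I_j.+1 -> 'I_n.+1} -> R) :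
  \sum_(f : {ffun 'I_j.+1 -> 'I_n.+1}) F f =
  \sum_c \sum_(g : {ffun 'I_j -> 'I_n.+1}) F (ffun_rcons g c).
Proof.
rewrite pair_bigA /=.
rewrite (reindex (fun p : 'I_n.+1 * {ffun 'I_j -> 'I_n.+1} => ffun_rcons p.2 p.1)) //=.
exists (fun f => (f ord_max, [ffun k => f (lift ord_max k)])) => [[c g] _|f _] /=.
  by rewrite ffun_rcons_max; congr pair; apply/ffunP => k; rewrite ffunE ffun_rcons_lift.
apply/ffunP => i; case: (unliftP ord_max i) => [k ->|->].
  by rewrite ffun_rcons_lift ffunE.
by rewrite ffun_rcons_max.
Qed.

Definition gmult (j : nat) b m : {poly int} :=
  \sum_(f : {ffun 'I_j -> 'I_n.+1} | [forall c, mult f c == m c]) 'X^(Dexp f b).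

Lemma gmult0 b m : (forall c, m c = 0%N) -> gmult 0 b m = 1.
Proof.
move=> m0; rewrite /gmult (eq_bigl xpredT) => [|f]; last first.
  by apply/forallP => c; rewrite m0 /mult big_ord0.
rewrite (eq_bigr (fun _ => 1)) => [|f _]; last by rewrite /Dexp big_geq.
by rewrite sumr_const -[#|_|]/#|{ffun 'I_0 -> 'I_n.+1}| card_ffun !card_ord expn0.
Qed.

Definition remove1 m c : 'I_n.+1 -> nat := fun i => (m i - (i == c))%N.

Lemma remove1_neq m c i : i != c -> remove1 m c i = m i.
Proof. by rewrite /remove1 => /negbTE ->; rewrite subn0. Qed.

Lemma mult_ffun_rconsE (j : nat) (g : {ffun 'I_j -> 'I_n.+1}) c m :
  [forall i, mult (ffun_rcons g c) i == m i] =
  (0 < m c)%N && [forall i, mult g i == remove1 m c i].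
Proof.
under eq_forallb do rewrite mult_ffun_rcons.
apply/forallP/andP => [mult_eq|[m_c_gt0 /forallP mult_eq] i].
  split; first by rewrite -(eqP (mult_eq c)) eqxx addn1.
  apply/forallP => i; have := mult_eq i; rewrite /remove1 [c == i]eq_sym.
  by case: (eqVneq i c) => [->|_] /eqP <-; rewrite ?addn1 ?subn1 ?addn0 ?subn0.
have := mult_eq i; rewrite /remove1 [c == i]eq_sym.
by case: (eqVneq i c) => [->|_] /eqP ->; rewrite ?addn1 ?subn1 ?prednK ?addn0 ?subn0.
Qed.

Lemma gmultS (j : nat) b m :
  gmult j.+1 b m =
  \sum_c (if (0 < m c)%N then 'X^(j.+1 * Hen b c) * gmult j c (remove1 m c) else 0).
Proof.
rewrite /gmult big_mkcond sum_ffun_rcons; apply: eq_bigr => c _.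
under eq_bigr do rewrite mult_ffun_rconsE.
case: ifP => m_c_gt0 /=; last by rewrite big1.
rewrite big_distrr [in RHS]big_mkcond; apply: eq_bigr => g _.
by case: ifP; rewrite ?mulr0 // Dexp_ffun_rcons exprD mulrC.
Qed.

Definition qpoch_prod m : {poly int} := \prod_c qpoch (m c).
Definition bin2_sum m : nat := (\sum_c 'C(m c, 2))%N.
Definition energy b m : nat := (\sum_c Hen b c * m c)%N.

Lemma sum_remove1 m c : (0 < m c)%N -> (\sum_i remove1 m c i)%N = ((\sum_i m i).-1)%N.
Proof.
move=> m_c_gt0; rewrite (bigD1 c) //= [in RHS](bigD1 c) //= /remove1 eqxx subn1.
by rewrite (eq_bigr _ (@remove1_neq m c)) -subn1 addnBAC // subn1.
Qed.

Lemma qpochS (k : nat) : qpoch k.+1 = qpoch k * (1 - 'X^(k.+1)).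
Proof. by rewrite /qpoch big_nat_recr. Qed.

Lemma qpoch_neq0 (k : nat) : qpoch k != 0.
Proof.
rewrite /qpoch prodf_seq_neq0; apply/allP => i; rewrite mem_index_iota => /andP [i_gt0 _].
apply/implyP => _; apply/eqP => /(congr1 (fun p : {poly int} => p`_0)).
by rewrite coefB coef1 coefXn coef0 eqxx (ltn_eqF i_gt0) subr0.
Qed.

Lemma qpoch_prod_remove1 m c : (0 < m c)%N ->
  qpoch_prod m = qpoch_prod (remove1 m c) * (1 - 'X^(m c)).
Proof.
move=> m_c_gt0; rewrite /qpoch_prod (bigD1 c) //= [in RHS](bigD1 c) //=.
rewrite (eq_bigr _ (fun i ne => congr1 qpoch (remove1_neq m ne))) /remove1 eqxx.
by rewrite -(prednK m_c_gt0) qpochS subn1 /=; ring.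
Qed.

Lemma bin2_sum_remove1 m c : (0 < m c)%N ->
  bin2_sum m = (bin2_sum (remove1 m c) + (m c).-1)%N.
Proof.
move=> m_c_gt0; rewrite /bin2_sum (bigD1 c) //= [in RHS](bigD1 c) //=.
rewrite (eq_bigr _ (fun i ne => congr1 (binomial^~ 2) (remove1_neq m ne))) /remove1 eqxx.
by rewrite -(prednK m_c_gt0) binS bin1 subn1 /= addnAC.
Qed.

Lemma energy_remove1 m c : (0 < m c)%N -> energy c m = (energy c (remove1 m c)).+1.
Proof.
move=> m_c_gt0; rewrite /energy (bigD1 c) //= [in RHS](bigD1 c) //=.
rewrite (eq_bigr _ (fun i ne => congr1 (muln _) (remove1_neq m ne))) /remove1 eqxx.
by rewrite /Hen ltnn !mul1n -(prednK m_c_gt0) subn1 addSn.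
Qed.

Lemma big_ord_inord (R : Type) (idx : R) (op : Monoid.law idx) (F : 'I_n.+1 -> R) :
  \big[op/idx]_(i < n.+1) F i = \big[op/idx]_(0 <= i < n.+1) F (inord i).
Proof. by rewrite big_mkord; apply: eq_bigr => i _; rewrite inord_val. Qed.

Lemma energy_partial_sum b m : energy b m = (\sum_(0 <= i < b.+1) m (inord i))%N.
Proof.
rewrite /energy big_ord_inord (big_cat_nat _ (n := b.+1)) //=.
rewrite [X in (_ + X)%N]big1_seq ?addn0.
  apply: eq_big_nat => i /andP [_ lt_i]; rewrite /Hen inordK; last first.
    exact: leq_trans lt_i (ltn_ord b).
  by rewrite ltnNge -ltnS lt_i mul1n.
by move=> i /andP [_]; rewrite mem_index_iota /Hen => /andP [lt_b lt_n]; rewrite inordK ?lt_b.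
Qed.

End Crystal.

(* The heart of the induction step: with partial sums Q_c = m_0 + ... + m_{c-1},
   the c-th term is q^{Q_N [c <= b]} (q^{Q_c} - q^{Q_{c+1}}), so both halves telescope. *)
Lemma sum_partial_telescope (N b : nat) (m : nat -> nat) : (b < N)%N ->
  \sum_(0 <= c < N)
     'X^((\sum_(0 <= i < N) m i) * (c <= b) + \sum_(0 <= i < c) m i)%N * (1 - 'X^(m c))
  = 'X^(\sum_(0 <= i < b.+1) m i) * (1 - 'X^(\sum_(0 <= i < N) m i)) :> {poly int}.
Proof.
move=> lt_b_N; set Q := fun c => (\sum_(0 <= i < c) m i)%N.
rewrite -/(Q N) -/(Q b.+1).
have QS c : Q c.+1 = (Q c + m c)%N by rewrite /Q big_nat_recr.
have Q0 : Q 0 = 0%N by rewrite /Q big_geq.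
have Q_mono : (Q b.+1 <= Q N)%N.
  by rewrite /Q [X in (_ <= X)%N](big_cat_nat _ (n := b.+1)) ?leq_addr //; lia.
rewrite (big_cat_nat _ (n := b.+1)) //=.
rewrite (telescope_sumr_eq (fun k => - 'X^(Q N + Q k))) //; last first.
  move=> k /andP [_]; rewrite ltnS => le_k_b.
  by rewrite -/(Q k) QS le_k_b muln1 !exprD; ring.
rewrite (telescope_sumr_eq (fun k => - 'X^(Q k))) //; last first.
  move=> k /andP [lt_b_k _].
  by rewrite -/(Q k) QS leqNgt lt_b_k muln0 add0n exprD; ring.
rewrite Q0 addn0 -(subnKC Q_mono) !exprD; ring.
Qed.

Lemma gmult_qpoch_prod (n j : nat) (b : 'I_n.+1) (m : 'I_n.+1 -> nat) :
  (\sum_c m c)%N = j ->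
  gmult j b m * qpoch_prod m = 'X^(bin2_sum m + energy b m) * qpoch j.
Proof.
elim: j => [|j IHj] in b m *.
  move=> /eqP; rewrite sum_nat_eq0 => /forallP m0.
  have m0E c : m c = 0%N by apply/eqP; exact: m0.
  have -> : qpoch_prod m = 1 by rewrite /qpoch_prod big1 // => c _; rewrite m0E /qpoch big_geq.
  have -> : bin2_sum m = 0%N by rewrite /bin2_sum big1 // => c _; rewrite m0E.
  have -> : energy b m = 0%N by rewrite /energy big1 // => c _; rewrite m0E muln0.
  by rewrite gmult0 // /qpoch big_geq.
move=> sum_m; rewrite gmultS big_distrl /=.
have termE c :
  (if (0 < m c)%N then 'X^(j.+1 * Hen b c) * gmult j c (remove1 m c) else 0)
    * qpoch_prod m =
  qpoch j * 'X^(bin2_sum m) *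
    ('X^(j.+1 * Hen b c + \sum_(0 <= i < c) m (inord i)) * (1 - 'X^(m c))).
  case: ifPn => [m_c_gt0|]; last by rewrite -leqNgt leqn0 => /eqP ->; rewrite subrr !mulr0 mul0r.
  have sum_rm : (\sum_i remove1 m c i)%N = j by rewrite sum_remove1 // sum_m.
  rewrite (qpoch_prod_remove1 m_c_gt0) mulrA -(mulrA _ (gmult _ _ _)) IHj //.
  have := bin2_sum_remove1 m_c_gt0; have := energy_remove1 m_c_gt0.
  rewrite energy_partial_sum big_nat_recr //= inord_val => eE bE.
  have -> : (bin2_sum (remove1 m c) + energy c (remove1 m c))%N =
            (bin2_sum m + \sum_(0 <= i < c) m (inord i))%N by lia.
  rewrite !exprD; ring.
rewrite (eq_bigr _ (fun c _ => termE c)) -big_distrr /= big_ord_inord.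
have sum_mS : (\sum_(0 <= i < n.+1) m (inord i))%N = j.+1 by rewrite -sum_m big_ord_inord.
rewrite (eq_big_nat _ _ (F2 := fun c =>
   'X^((\sum_(0 <= i < n.+1) m (inord i)) * (c <= b)
       + \sum_(0 <= i < c) m (inord i))%N * (1 - 'X^(m (inord c))))); last first.
  by move=> c /andP [_ lt_c]; rewrite /Hen inordK // sum_mS leqNgt ltnS; case: ltnP.
rewrite sum_partial_telescope // sum_mS qpochS -energy_partial_sum exprD; ring.
Qed.

Lemma Posz_bin2 (k : nat) : ((k%:Z * (k%:Z - 1)) %/ 2)%Z = ('C(k, 2))%:Z.
Proof.
case: k => [//|k]; rewrite -addn1 PoszD addrK -PoszM divz_nat.
by rewrite addn1 bin2 /= divn2.
Qed.

Lemma gfun_muwtE (n j : nat) (b : 'I_n.+1) (mu : 'I_n.+1 -> int) :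
  \sum_i mu i = j%:Z ->
  gfun j b (muwt mu) =
    \sum_(f : {ffun 'I_j -> 'I_n.+1} | [forall c, (mult f c)%:Z == mu c]) 'X^(Dexp f b).
Proof. by move=> sum_mu; apply: eq_bigl => f; rewrite totwt_muwtE. Qed.

Lemma gfun_muwt_neg (n j : nat) (b : 'I_n.+1) (mu : 'I_n.+1 -> int) :
  \sum_i mu i = j%:Z -> ~~ [forall c, 0 <= mu c] -> gfun j b (muwt mu) = 0.
Proof.
move=> sum_mu mu_neg; rewrite gfun_muwtE // big1 // => f /forallP mult_eq.
by case/negP: mu_neg; apply/forallP => c; rewrite -(eqP (mult_eq c)).
Qed.

Section NonnegativeMultiplicities.

Variables (n j : nat) (b : 'I_n.+1) (mu : 'I_n.+1 -> int) (m : 'I_n.+1 -> nat).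
Hypothesis muE : forall c, mu c = (m c)%:Z.

Lemma gfun_muwt_gmult : \sum_i mu i = j%:Z -> gfun j b (muwt mu) = gmult j b m.
Proof.
move=> sum_mu; rewrite gfun_muwtE //; apply: eq_bigl => f.
by apply: eq_forallb => c; rewrite muE eqz_nat.
Qed.

Lemma sum_mu_nat : \sum_i mu i = j%:Z -> (\sum_c m c)%N = j.
Proof.
move=> sum_mu; apply/eqP; rewrite -eqz_nat -natz natr_sum -sum_mu.
by apply/eqP/eq_bigr => c _; rewrite natz muE.
Qed.

Lemma qexponentE :
  \sum_i ((mu i * (mu i - 1)) %/ 2)%Z + \sum_i (Hen b i)%:Z * mu i
  = (bin2_sum m + energy b m)%N.
Proof.
rewrite PoszD /bin2_sum /energy -!natz !natr_sum.
by congr (_ + _); apply: eq_bigr => c _; rewrite muE ?Posz_bin2 natz // PoszM.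
Qed.

End NonnegativeMultiplicities.

Theorem mainTheorem12 (n j : nat) (b : 'I_n.+1) (mu : 'I_n.+1 -> int) :
  (1 <= n)%N ->
  \sum_(i < n.+1) mu i = j%:Z ->
  tofrac (gfun j b (muwt mu)) =
    qF ^ ((\sum_(i < n.+1) ((mu i * (mu i - 1)) %/ 2)%Z)
          + \sum_(i < n.+1) (Hen b i)%:Z * mu i)
    * qmultinom j mu.
Proof.
move=> _ sum_mu.
have [mu_ge0|mu_neg] := boolP [forall c, 0 <= mu c]; last first.
  by rewrite gfun_muwt_neg // /qmultinom (negbTE mu_neg) andbF mulr0 rmorph0.
pose m c := `|mu c|%N.
have muE c : mu c = (m c)%:Z by rewrite gez0_abs // (forallP mu_ge0).
have sum_m := sum_mu_nat muE sum_mu.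
rewrite (gfun_muwt_gmult b muE) // (qexponentE b muE).
rewrite /qmultinom sum_mu eqxx mu_ge0 -exprnP /qF -rmorphXn.
have qpoch_prod_neq0 : tofrac (qpoch_prod m) != 0 :> ratfun.
  by rewrite tofrac_eq0 prodf_seq_neq0; apply/allP => c _; rewrite qpoch_neq0.
rewrite -[tofrac (gmult _ _ _)](mulfK qpoch_prod_neq0) -rmorphM gmult_qpoch_prod //.
by rewrite /= rmorphM -mulrA /qpoch_prod [X in _ / X]rmorph_prod.
Qed.
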